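(* Let $A=I_0+\dots+I_n$ be a sum of C$^*$-ideals, $J\subseteq\{0,\dots,n\}$ and $p\in\mathbb N$. Let $f\in B_J$ satisfy $f|_{\Delta^n_L}=0$ for every $L\subseteq\{0,\dots,n\}$ with $|L|=p+1$. Then $f$ is a finite sum $f=\sum_L f_L$ with $f_L\in B_L$, where each occurring $L$ satisfies $L\subseteq J$ and $|L|\le p$.
   Context: $\Delta^n=\{x\in[0,1]^{n+1}:\sum_ix_i=1\}$, $\partial\Delta^n$ = points with a zero coordinate, $\Delta^n_j=\{x\in\Delta^n:x_j\le x_i\ \forall i\}$, $\Delta^n_L=\bigcap_{j\in L}\Delta^n_j$ for nonempty $L$. $B=\{f:\Delta^n\to A\text{ continuous}: f|_{\partial\Delta^n}=0,\ f(\Delta^n_j)\subseteq I_j\ \forall j\}$ and $B_L=\{f\in B:f(\Delta^n_{j'})=0\ \forall j'\notin L\}$ (so $B_\emptyset=0$). *)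

From Stdlib Require Import Reals List.
Import ListNotations.
Open Scope R_scope.

Record Cplx : Type := mkC { Cre : R ; Cim : R }.
Definition Cadd (a b : Cplx) : Cplx := mkC (Cre a + Cre b) (Cim a + Cim b).
Definition Cmul (a b : Cplx) : Cplx :=
  mkC (Cre a * Cre b - Cim a * Cim b) (Cre a * Cim b + Cim a * Cre b).
Definition Cconj (a : Cplx) : Cplx := mkC (Cre a) (- Cim a).
Definition Cabs (a : Cplx) : R := sqrt (Cre a * Cre a + Cim a * Cim a).
Definition C1 : Cplx := mkC 1 0.

Record CStarAlgebra : Type := {
  car :> Type;
  zero : car;
  add : car -> car -> car;
  opp : car -> car;
  mul : car -> car -> car;
  scal : Cplx -> car -> car;
  star : car -> car;
  norm : car -> R;
  add_assoc : forall x y z, add x (add y z) = add (add x y) z;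
  add_comm : forall x y, add x y = add y x;
  add_zero : forall x, add x zero = x;
  add_opp : forall x, add x (opp x) = zero;
  scal_assoc : forall a b x, scal a (scal b x) = scal (Cmul a b) x;
  scal_one : forall x, scal C1 x = x;
  scal_distr_l : forall a x y, scal a (add x y) = add (scal a x) (scal a y);
  scal_distr_r : forall a b x, scal (Cadd a b) x = add (scal a x) (scal b x);
  mul_assoc : forall x y z, mul x (mul y z) = mul (mul x y) z;
  mul_add_l : forall x y z, mul (add x y) z = add (mul x z) (mul y z);
  mul_add_r : forall x y z, mul x (add y z) = add (mul x y) (mul x z);
  mul_scal_l : forall a x y, mul (scal a x) y = scal a (mul x y);
  mul_scal_r : forall a x y, mul x (scal a y) = scal a (mul x y);
  norm_nonneg : forall x, 0 <= norm x;
  norm_eq0 : forall x, norm x = 0 -> x = zero;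
  norm_triangle : forall x y, norm (add x y) <= norm x + norm y;
  norm_scal : forall a x, norm (scal a x) = Cabs a * norm x;
  norm_submult : forall x y, norm (mul x y) <= norm x * norm y;
  complete : forall u : nat -> car,
    (forall eps, eps > 0 -> exists N, forall m k, (m >= N)%nat -> (k >= N)%nat ->
        norm (add (u m) (opp (u k))) < eps) ->
    exists l, forall eps, eps > 0 -> exists N, forall m, (m >= N)%nat ->
        norm (add (u m) (opp l)) < eps;
  star_add : forall x y, star (add x y) = add (star x) (star y);
  star_scal : forall a x, star (scal a x) = scal (Cconj a) (star x);
  star_mul : forall x y, star (mul x y) = mul (star y) (star x);
  star_star : forall x, star (star x) = x;
  cstar_id : forall x, norm (mul (star x) x) = norm x * norm x
}.

Arguments zero {_}.
Arguments add {_}.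
Arguments opp {_}.
Arguments mul {_}.
Arguments scal {_}.
Arguments norm {_}.

Definition is_cstar_ideal (A : CStarAlgebra) (I : A -> Prop) : Prop :=
  I zero /\
  (forall x y, I x -> I y -> I (add x y)) /\
  (forall a x, I x -> I (scal a x)) /\
  (forall a x, I x -> I (mul a x) /\ I (mul x a)) /\
  (forall (u : nat -> A) (l : A), (forall m, I (u m)) ->
     (forall eps, eps > 0 -> exists N, forall m, (m >= N)%nat ->
        norm (add (u m) (opp l)) < eps) -> I l).

Fixpoint asum (A : CStarAlgebra) (g : nat -> A) (n : nat) : A :=
  match n with
  | O => g O
  | S k => add (asum A g k) (g (S k))
  end.

Definition is_sum_of_ideals (A : CStarAlgebra) (I : nat -> A -> Prop) (n : nat) : Prop :=
  (forall j, (j <= n)%nat -> is_cstar_ideal A (I j)) /\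
  (forall a : A, exists g : nat -> A,
      (forall j, (j <= n)%nat -> I j (g j)) /\ a = asum A g n).

(** Points of R^{n+1} are functions nat -> R; only coordinates 0..n matter. *)
Definition simplex (n : nat) (x : nat -> R) : Prop :=
  (forall i, (i <= n)%nat -> 0 <= x i <= 1) /\ sum_f_R0 x n = 1.

Definition simplex_boundary (n : nat) (x : nat -> R) : Prop :=
  simplex n x /\ exists i, (i <= n)%nat /\ x i = 0.

Definition simplex_j (n j : nat) (x : nat -> R) : Prop :=
  simplex n x /\ forall i, (i <= n)%nat -> x j <= x i.

Definition simplex_L (n : nat) (L : list nat) (x : nat -> R) : Prop :=
  simplex n x /\ forall j, In j L -> simplex_j n j x.

(** L is a subset of {0,...,n} (given as a duplicate-free list, |L| = length L) *)
Definition index_set (n : nat) (L : list nat) : Prop :=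
  NoDup L /\ forall j, In j L -> (j <= n)%nat.

Definition cont_on_simplex (A : CStarAlgebra) (n : nat) (f : (nat -> R) -> A) : Prop :=
  forall x, simplex n x -> forall eps, eps > 0 -> exists delta, delta > 0 /\
    forall y, simplex n y -> (forall i, (i <= n)%nat -> Rabs (y i - x i) < delta) ->
      norm (add (f y) (opp (f x))) < eps.

Definition in_B (A : CStarAlgebra) (I : nat -> A -> Prop) (n : nat)
    (f : (nat -> R) -> A) : Prop :=
  cont_on_simplex A n f /\
  (forall x, simplex_boundary n x -> f x = zero) /\
  (forall j x, (j <= n)%nat -> simplex_j n j x -> I j (f x)).

Definition in_B_L (A : CStarAlgebra) (I : nat -> A -> Prop) (n : nat)
    (L : list nat) (f : (nat -> R) -> A) : Prop :=
  in_B A I n f /\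
  (forall j' x, (j' <= n)%nat -> ~ In j' L -> simplex_j n j' x -> f x = zero).

Definition fam_sum (A : CStarAlgebra) (F : list (list nat * ((nat -> R) -> A)))
    (x : nat -> R) : A :=
  fold_right (fun p acc => add (snd p x) acc) zero F.


From Stdlib Require Import Reals List Arith Lra Lia Classical.
Import ListNotations.
Open Scope R_scope.

(* A partition of unity on the simplex.  With [gap j x = x_j - min_i x_i], the
   weight [w_L = prod_(j not in L) gap j] vanishes exactly on the [Delta_j] with
   [j] not in [L].  Normalizing the weights of the subsets [L] of [J] with
   [|L| <= p] gives functions [w_L / sum w] with values in [[0, 1]] that vanish
   on these [Delta_j], so [f_L := (w_L / sum w) f] lies in [B_L].  Where all
   weights vanish, [x] lies in some [Delta_j] with [j] outside [J] or in some
   [Delta_L] with [|L| = p + 1], so [f x = 0]; this gives [sum_L f_L = f] and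
   makes [f_L] continuous even where the quotient is not. *)

Definition rC (r : R) : Cplx := mkC r 0.

Section RealScaling.
Variable A : CStarAlgebra.

Lemma addr_eq0_opp (x y : A) : add x y = zero -> y = opp x.
Proof.
  intro H. rewrite <- (add_zero A y), <- (add_opp A x), (add_assoc A), (add_comm A y x), H.
  now rewrite (add_comm A), add_zero.
Qed.

Lemma idempotent_add_eq0 (s : A) : add s s = s -> s = zero.
Proof.
  intro H. transitivity (add (add s s) (opp s)).
  - now rewrite <- (add_assoc A), (add_opp A), add_zero.
  - now rewrite H, add_opp.
Qed.

Lemma oppr0 : opp (@zero A) = zero.
Proof. symmetry. apply addr_eq0_opp, add_zero. Qed.

Lemma scaler0 (c : Cplx) : scal c (@zero A) = zero.
Proof. apply idempotent_add_eq0. now rewrite <- scal_distr_l, add_zero. Qed.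

Lemma scalerDl (a b : R) (v : A) :
  add (scal (rC a) v) (scal (rC b) v) = scal (rC (a + b)) v.
Proof. rewrite <- scal_distr_r. unfold Cadd, rC; simpl. now rewrite Rplus_0_l. Qed.

Lemma scale0r (v : A) : scal (rC 0) v = zero.
Proof. apply idempotent_add_eq0. now rewrite scalerDl, Rplus_0_l. Qed.

Lemma scaleNr (r : R) (v : A) : opp (scal (rC r) v) = scal (rC (- r)) v.
Proof.
  symmetry. apply addr_eq0_opp. now rewrite scalerDl, Rplus_opp_r, scale0r.
Qed.

Lemma scalerN (r : R) (v : A) : scal (rC r) (opp v) = opp (scal (rC r) v).
Proof. apply addr_eq0_opp. now rewrite <- scal_distr_l, add_opp, scaler0. Qed.

Lemma scale_sub_split (a b : R) (u v : A) :
  add (scal (rC a) u) (opp (scal (rC b) v)) =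
  add (scal (rC a) (add u (opp v))) (scal (rC (a - b)) v).
Proof.
  rewrite scal_distr_l, scalerN, !scaleNr, <- add_assoc, scalerDl.
  do 3 f_equal. ring.
Qed.

Lemma norm_scaleR (r : R) (v : A) : norm (scal (rC r) v) = Rabs r * norm v.
Proof.
  rewrite norm_scal. unfold Cabs, rC; simpl.
  now rewrite Rmult_0_l, Rplus_0_r, <- sqrt_Rsqr_abs.
Qed.

End RealScaling.

Definition rcont_at (n : nat) (h : (nat -> R) -> R) (x : nat -> R) : Prop :=
  forall eps, eps > 0 -> exists d, d > 0 /\ forall y, simplex n y ->
    (forall i, (i <= n)%nat -> Rabs (y i - x i) < d) -> Rabs (h y - h x) < eps.

Section RealContinuity.
Variables (n : nat) (x : nat -> R).

Lemma rcont_at_ext (h1 h2 : (nat -> R) -> R) :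
  (forall y, h1 y = h2 y) -> rcont_at n h1 x -> rcont_at n h2 x.
Proof.
  intros E H eps He. destruct (H eps He) as [d [Hd Hy]].
  exists d; split; auto. intros y Sy Cy. rewrite <- !E. auto.
Qed.

Lemma rcont_at_const (c : R) : rcont_at n (fun _ => c) x.
Proof.
  intros eps He. exists 1; split; [lra|]. intros. rewrite Rminus_diag, Rabs_R0. lra.
Qed.

Lemma rcont_at_coord (i : nat) : (i <= n)%nat -> rcont_at n (fun y => y i) x.
Proof. intros Hi eps He. exists eps; split; auto. Qed.

Lemma rcont_at_comp (h : (nat -> R) -> R) (g : R -> R) :
  rcont_at n h x -> continuity_pt g (h x) -> rcont_at n (fun y => g (h y)) x.
Proof.
  intros H G eps He. destruct (G eps He) as [a [Ha Hg]].
  destruct (H a Ha) as [d [Hd Hy]]. exists d; split; auto.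
  intros y Sy Cy. destruct (Req_dec_T (h y) (h x)) as [E|E].
  - rewrite E, Rminus_diag, Rabs_R0. lra.
  - apply (Hg (h y)). split; [split; [exact I | auto] | apply (Hy y Sy Cy)].
Qed.

Lemma rcont_at_plus (h1 h2 : (nat -> R) -> R) :
  rcont_at n h1 x -> rcont_at n h2 x -> rcont_at n (fun y => h1 y + h2 y) x.
Proof.
  intros H1 H2 eps He.
  destruct (H1 (eps / 2)) as [d1 [Hd1 Y1]]; [lra|].
  destruct (H2 (eps / 2)) as [d2 [Hd2 Y2]]; [lra|].
  exists (Rmin d1 d2); split; [now apply Rmin_pos|].
  intros y Sy Cy.
  pose proof (Y1 y Sy (fun i hi => Rlt_le_trans _ _ _ (Cy i hi) (Rmin_l _ _))).
  pose proof (Y2 y Sy (fun i hi => Rlt_le_trans _ _ _ (Cy i hi) (Rmin_r _ _))).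
  replace (h1 y + h2 y - (h1 x + h2 x)) with ((h1 y - h1 x) + (h2 y - h2 x)) by ring.
  eapply Rle_lt_trans; [apply Rabs_triang | lra].
Qed.

Lemma rcont_at_opp (h : (nat -> R) -> R) :
  rcont_at n h x -> rcont_at n (fun y => - h y) x.
Proof. intro H. apply (rcont_at_comp h Ropp H). reg. Qed.

(* Polarization reduces products to sums and the continuity of squaring. *)
Lemma rcont_at_mult (h1 h2 : (nat -> R) -> R) :
  rcont_at n h1 x -> rcont_at n h2 x -> rcont_at n (fun y => h1 y * h2 y) x.
Proof.
  intros H1 H2. set (q := fun t => t * t / 4).
  apply (rcont_at_ext (fun y => q (h1 y + h2 y) + - q (h1 y + - h2 y))).
  { intro y. unfold q. field. }
  assert (Hq : forall h, rcont_at n h x -> rcont_at n (fun y => q (h y)) x).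
  { intros h H. apply (rcont_at_comp h q H). unfold q. reg. }
  apply rcont_at_plus; [|apply rcont_at_opp]; apply Hq, rcont_at_plus; auto.
  now apply rcont_at_opp.
Qed.

Lemma rcont_at_inv (h : (nat -> R) -> R) :
  rcont_at n h x -> h x <> 0 -> rcont_at n (fun y => / h y) x.
Proof. intros H Hx. apply (rcont_at_comp h Rinv H). reg. Qed.

Lemma rcont_at_min (h1 h2 : (nat -> R) -> R) :
  rcont_at n h1 x -> rcont_at n h2 x -> rcont_at n (fun y => Rmin (h1 y) (h2 y)) x.
Proof.
  intros H1 H2.
  apply (rcont_at_ext (fun y => (h1 y + h2 y + - Rabs (h1 y + - h2 y)) / 2)).
  { intro y. unfold Rmin. destruct (Rle_dec (h1 y) (h2 y)).
    - rewrite Rabs_left1; lra.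
    - rewrite Rabs_right; lra. }
  apply (rcont_at_comp _ (fun t => t / 2)); [|reg].
  apply rcont_at_plus; [now apply rcont_at_plus|].
  apply rcont_at_opp, (rcont_at_comp _ Rabs); [|apply Rcontinuity_abs].
  apply rcont_at_plus; [|apply rcont_at_opp]; auto.
Qed.

End RealContinuity.

Section ScaledFunctions.
Variables (A : CStarAlgebra) (n : nat).

(* [h] need only be continuous where [f] does not vanish: elsewhere the
   bound [0 <= h <= 1] controls [h f] by [f]. *)
Lemma cont_on_simplex_scale (f : (nat -> R) -> A) (h : (nat -> R) -> R) :
  cont_on_simplex A n f -> (forall y, 0 <= h y <= 1) ->
  (forall x, simplex n x -> f x <> zero -> rcont_at n h x) ->
  cont_on_simplex A n (fun y => scal (rC (h y)) (f y)).
Proof.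
  intros fc hb hc x Sx eps He.
  destruct (classic (f x = zero)) as [Z|NZ].
  - destruct (fc x Sx eps He) as [d [Hd Y]]. exists d; split; auto.
    intros y Sy Cy. specialize (Y y Sy Cy).
    rewrite Z, oppr0, add_zero in Y. rewrite Z, scaler0, oppr0, add_zero, norm_scaleR.
    destruct (hb y). rewrite Rabs_right by lra.
    pose proof (norm_nonneg A (f y)). nra.
  - set (N := norm (f x)). assert (HN : 0 <= N) by apply norm_nonneg.
    destruct (fc x Sx (eps / 2)) as [d1 [Hd1 Y1]]; [lra|].
    destruct (hc x Sx NZ (eps / (2 * (N + 1)))) as [d2 [Hd2 Y2]].
    { apply Rdiv_lt_0_compat; lra. }
    exists (Rmin d1 d2); split; [now apply Rmin_pos|].
    intros y Sy Cy.
    pose proof (Y1 y Sy (fun i hi => Rlt_le_trans _ _ _ (Cy i hi) (Rmin_l _ _))).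
    pose proof (Y2 y Sy (fun i hi => Rlt_le_trans _ _ _ (Cy i hi) (Rmin_r _ _))).
    rewrite scale_sub_split. eapply Rle_lt_trans; [apply norm_triangle|].
    rewrite !norm_scaleR. fold N. destruct (hb y).
    rewrite (Rabs_right (h y)) by lra.
    pose proof (norm_nonneg A (add (f y) (opp (f x)))).
    assert (Rabs (h y - h x) * N <= eps / (2 * (N + 1)) * N)
      by (apply Rmult_le_compat_r; lra).
    assert (eps / (2 * (N + 1)) * N < eps / 2).
    { apply (Rmult_lt_reg_r (2 * (N + 1))); [lra|].
      replace (eps / (2 * (N + 1)) * N * (2 * (N + 1))) with (eps * N) by (field; lra).
      replace (eps / 2 * (2 * (N + 1))) with (eps * N + eps) by (field; lra). lra. }
    nra.
Qed.

Lemma in_B_L_scale (I : nat -> A -> Prop) (L : list nat)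
    (f : (nat -> R) -> A) (h : (nat -> R) -> R) :
  (forall j, (j <= n)%nat -> is_cstar_ideal A (I j)) ->
  in_B A I n f -> (forall y, 0 <= h y <= 1) ->
  (forall x, simplex n x -> f x <> zero -> rcont_at n h x) ->
  (forall j x, (j <= n)%nat -> ~ In j L -> simplex_j n j x -> h x = 0) ->
  in_B_L A I n L (fun y => scal (rC (h y)) (f y)).
Proof.
  intros hI [fc [fb fi]] hb hc hL. split; [split; [|split]|].
  - now apply cont_on_simplex_scale.
  - intros x Bx. now rewrite (fb x Bx), scaler0.
  - intros j x Hj Sj. apply (hI j Hj), fi; auto.
  - intros j x Hj HnL Sj. now rewrite (hL j x Hj HnL Sj), scale0r.
Qed.

End ScaledFunctions.

Fixpoint coord_min (k : nat) (x : nat -> R) : R :=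
  match k with O => x O | S k' => Rmin (coord_min k' x) (x (S k')) end.

Definition gap (n j : nat) (x : nat -> R) : R := x j - coord_min n x.

Lemma coord_min_le k x j : (j <= k)%nat -> coord_min k x <= x j.
Proof.
  induction k as [|k IHk]; intro H; simpl.
  - replace j with O by lia. lra.
  - destruct (Nat.eq_dec j (S k)) as [->|Hn]; [apply Rmin_r|].
    eapply Rle_trans; [apply Rmin_l | apply IHk; lia].
Qed.

Lemma coord_min_attained k x : exists i, (i <= k)%nat /\ coord_min k x = x i.
Proof.
  induction k as [|k [i [Hi E]]]; simpl; [now exists O|].
  unfold Rmin. destruct (Rle_dec (coord_min k x) (x (S k))).
  - exists i; split; auto.
  - exists (S k); split; auto.
Qed.

Lemma gap_nonneg n j x : (j <= n)%nat -> 0 <= gap n j x.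
Proof. intro H. unfold gap. pose proof (coord_min_le n x j H). lra. Qed.

Lemma simplex_j_gap0 n j x :
  (j <= n)%nat -> simplex n x -> simplex_j n j x <-> gap n j x = 0.
Proof.
  intros Hj Sx. unfold gap. split.
  - intros [_ H]. destruct (coord_min_attained n x) as [i [Hi E]].
    pose proof (coord_min_le n x j Hj). pose proof (H i Hi). lra.
  - intro G. split; auto. intros i Hi. pose proof (coord_min_le n x i Hi). lra.
Qed.

Lemma rcont_at_coord_min n k x : (k <= n)%nat -> rcont_at n (coord_min k) x.
Proof.
  induction k as [|k IHk]; intro H; simpl.
  - now apply rcont_at_coord.
  - apply rcont_at_min; [apply IHk | apply rcont_at_coord]; lia.
Qed.

Lemma rcont_at_gap n j x : (j <= n)%nat -> rcont_at n (gap n j) x.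
Proof.
  intro H. apply (rcont_at_ext n x (fun y => y j + - coord_min n y)).
  { intro y. unfold gap. ring. }
  apply rcont_at_plus; [now apply rcont_at_coord|].
  apply rcont_at_opp, rcont_at_coord_min. lia.
Qed.

Definition gap_factor (n : nat) (L : list nat) (j : nat) (x : nat -> R) : R :=
  if in_dec Nat.eq_dec j L then 1 else gap n j x.

Fixpoint gap_prod (n : nat) (L : list nat) (k : nat) (x : nat -> R) : R :=
  match k with
  | O => gap_factor n L O x
  | S k' => gap_prod n L k' x * gap_factor n L (S k') x
  end.

Section GapProduct.
Variables (n : nat) (L : list nat).

Lemma gap_factor_nonneg j x : (j <= n)%nat -> 0 <= gap_factor n L j x.
Proof. intro H. unfold gap_factor. destruct in_dec; [lra | now apply gap_nonneg]. Qed.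

Lemma rcont_at_gap_factor j x : (j <= n)%nat -> rcont_at n (gap_factor n L j) x.
Proof.
  intro H. unfold gap_factor.
  destruct in_dec; [apply rcont_at_const | now apply rcont_at_gap].
Qed.

Lemma gap_prod_nonneg k x : (k <= n)%nat -> 0 <= gap_prod n L k x.
Proof.
  induction k as [|k IHk]; intro H; simpl; [now apply gap_factor_nonneg|].
  apply Rmult_le_pos; [apply IHk | apply gap_factor_nonneg]; lia.
Qed.

Lemma gap_prod_eq0 k x j :
  (j <= k)%nat -> ~ In j L -> gap n j x = 0 -> gap_prod n L k x = 0.
Proof.
  intros Hj HL Hg. induction k as [|k IHk]; simpl.
  - replace j with O in * by lia. unfold gap_factor. now destruct in_dec.
  - destruct (Nat.eq_dec j (S k)) as [->|Hn].
    + unfold gap_factor. destruct in_dec; [tauto|]. rewrite Hg. ring.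
    + rewrite IHk; [ring | lia].
Qed.

Lemma gap_prod_pos k x :
  (forall j, (j <= k)%nat -> ~ In j L -> gap n j x > 0) -> gap_prod n L k x > 0.
Proof.
  intro H. assert (Hf : forall j, (j <= k)%nat -> gap_factor n L j x > 0).
  { intros j Hj. unfold gap_factor. destruct in_dec; [lra | auto]. }
  clear H. induction k as [|k IHk]; simpl; [auto|].
  apply Rmult_lt_0_compat; [apply IHk; intros j Hj|]; apply Hf; lia.
Qed.

Lemma rcont_at_gap_prod k x : (k <= n)%nat -> rcont_at n (gap_prod n L k) x.
Proof.
  induction k as [|k IHk]; intro H; simpl; [now apply rcont_at_gap_factor|].
  apply rcont_at_mult; [apply IHk | apply rcont_at_gap_factor]; lia.
Qed.

End GapProduct.

Fixpoint sublists (l : list nat) : list (list nat) :=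
  match l with
  | [] => [[]]
  | a :: l' => map (cons a) (sublists l') ++ sublists l'
  end.

Lemma filter_in_sublists (P : nat -> bool) l : In (filter P l) (sublists l).
Proof.
  induction l as [|a l IHl]; simpl; auto.
  destruct (P a); apply in_or_app; [left; now apply in_map | now right].
Qed.

Lemma in_sublists L l : In L (sublists l) -> incl L l /\ (NoDup l -> NoDup L).
Proof.
  revert L; induction l as [|a l IHl]; simpl; intros L H.
  - destruct H as [<-|[]]. split; [intros ? [] | constructor].
  - apply in_app_or in H. destruct H as [H|H].
    + apply in_map_iff in H. destruct H as [L' [<- H]].
      destruct (IHl L' H) as [I1 I2]. split.
      * intros z [<-|Hz]; [now left | right; auto].
      * intro ND. inversion ND; subst. constructor; auto.
    + destruct (IHl L H) as [I1 I2]. split.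
      * intros z Hz; right; auto.
      * intro ND. inversion ND; auto.
Qed.

Definition rsum (Ls : list (list nat)) (D : list nat -> R) : R :=
  fold_right (fun L acc => D L + acc) 0 Ls.

Lemma rsum_nonneg Ls D : (forall L, 0 <= D L) -> 0 <= rsum Ls D.
Proof. intro H. induction Ls as [|L Ls IH]; simpl; [lra|]. pose proof (H L). lra. Qed.

Lemma rsum_ge_term Ls D L : (forall L, 0 <= D L) -> In L Ls -> D L <= rsum Ls D.
Proof.
  intros H. induction Ls as [|L' Ls IH]; simpl; [tauto|]. intros [<-|Hi].
  - pose proof (rsum_nonneg Ls D H). lra.
  - pose proof (IH Hi). pose proof (H L'). lra.
Qed.

Lemma rsum_div Ls D c : rsum Ls (fun L => D L / c) = rsum Ls D / c.
Proof. induction Ls as [|L Ls IH]; simpl; [unfold Rdiv; ring|]. rewrite IH. unfold Rdiv; ring. Qed.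

Lemma rcont_at_rsum n Ls (D : list nat -> (nat -> R) -> R) x :
  (forall L, rcont_at n (D L) x) -> rcont_at n (fun y => rsum Ls (fun L => D L y)) x.
Proof.
  intro H. induction Ls as [|L Ls IH]; simpl; [apply rcont_at_const|].
  now apply rcont_at_plus.
Qed.

Lemma fam_sum_scale (A : CStarAlgebra) Ls (c : list nat -> (nat -> R) -> R)
    (v : (nat -> R) -> A) x :
  fam_sum A (map (fun L => (L, fun y => scal (rC (c L y)) (v y))) Ls) x =
  scal (rC (rsum Ls (fun L => c L x))) (v x).
Proof.
  induction Ls as [|L Ls IH]; simpl.
  - symmetry. apply scale0r.
  - unfold fam_sum in *. simpl. rewrite IH. apply scalerDl.
Qed.

(* Also for [b = 0], as [a / 0 = 0]. *)
Lemma Rdiv_unit_interval (a b : R) : 0 <= a <= b -> 0 <= a / b <= 1.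
Proof.
  intros [Ha Hab]. destruct (Req_dec_T b 0) as [->|Hb].
  - rewrite Rdiv_0_r. lra.
  - assert (0 < / b) by (apply Rinv_0_lt_compat; lra). split; [nra|].
    apply (Rmult_le_reg_r b); [lra|]. unfold Rdiv. rewrite Rmult_assoc, Rinv_l; lra.
Qed.

Section PartitionOfUnity.
Variables (n p : nat) (J : list nat).
Hypothesis hJ : index_set n J.

Definition small_subsets : list (list nat) :=
  filter (fun L => (length L <=? p)%nat) (sublists J).

Definition weight_sum (x : nat -> R) : R :=
  rsum small_subsets (fun L => gap_prod n L n x).

Definition pu_weight (L : list nat) (x : nat -> R) : R :=
  gap_prod n L n x / weight_sum x.

Lemma in_small_subsets L :
  In L small_subsets -> index_set n L /\ incl L J /\ (length L <= p)%nat.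
Proof.
  intro H. apply filter_In in H. destruct H as [Hs Hl]. apply Nat.leb_le in Hl.
  destruct (in_sublists L J Hs) as [Inc ND].
  split; [split; [apply ND, hJ | intros j Hj; apply hJ; auto] | auto].
Qed.

Lemma pu_weight_bounds L y : In L small_subsets -> 0 <= pu_weight L y <= 1.
Proof.
  intro HL. apply Rdiv_unit_interval. split; [now apply gap_prod_nonneg|].
  apply (rsum_ge_term _ (fun L => gap_prod n L n y)); auto.
  intro; now apply gap_prod_nonneg.
Qed.

Lemma rcont_at_pu_weight L x : weight_sum x <> 0 -> rcont_at n (pu_weight L) x.
Proof.
  intro Hx. apply (rcont_at_ext n x (fun y => gap_prod n L n y * / weight_sum y)).
  { reflexivity. }
  apply rcont_at_mult; [now apply rcont_at_gap_prod|].
  apply rcont_at_inv; auto. apply rcont_at_rsum. intro; now apply rcont_at_gap_prod.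
Qed.

Lemma pu_weight_eq0 L j x :
  (j <= n)%nat -> ~ In j L -> simplex_j n j x -> pu_weight L x = 0.
Proof.
  intros Hj HL Sj. unfold pu_weight.
  rewrite (gap_prod_eq0 n L n x j Hj HL); [apply Rdiv_0_l|].
  apply simplex_j_gap0; auto. apply Sj.
Qed.

Lemma rsum_pu_weight x :
  weight_sum x <> 0 -> rsum small_subsets (fun L => pu_weight L x) = 1.
Proof. intro Hx. unfold pu_weight. rewrite rsum_div. now apply Rdiv_diag. Qed.

(* If no [Delta_j] with [j] outside [J] contains [x], then [x] lies in
   [Delta_j] for [j] in [Z := {j in J | gap j x = 0}] and in no other [Delta_j];
   so either [|Z| <= p] and the weight of [Z] is positive, or [x] lies in
   [Delta_L] for the first [p + 1] elements [L] of [Z]. *)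
Lemma weight_sum_eq0 x : simplex n x -> weight_sum x = 0 ->
  (exists j, (j <= n)%nat /\ ~ In j J /\ simplex_j n j x) \/
  (exists L, index_set n L /\ length L = S p /\ simplex_L n L x).
Proof.
  intros Sx H0.
  destruct (classic (exists j, (j <= n)%nat /\ ~ In j J /\ gap n j x = 0))
    as [[j [Hj [HJ G]]]|Hout].
  { left. exists j. split; [|split]; auto. now apply simplex_j_gap0. }
  right. set (Z := filter (fun j => if Req_dec_T (gap n j x) 0 then true else false) J).
  assert (HZ : forall j, In j Z <-> In j J /\ gap n j x = 0).
  { intro j. unfold Z. rewrite filter_In. destruct Req_dec_T; intuition discriminate. }
  destruct (le_lt_dec (length Z) p) as [Hle|Hlt].
  - exfalso.
    assert (HinZ : In Z small_subsets).
    { apply filter_In. split; [apply filter_in_sublists | now apply Nat.leb_le]. }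
    assert (Hpos : gap_prod n Z n x > 0).
    { apply gap_prod_pos. intros j Hj HnZ.
      destruct (gap_nonneg n j x Hj) as [|E]; [auto|].
      destruct (classic (In j J)) as [HJ|HJ].
      - exfalso. apply HnZ, HZ. auto.
      - exfalso. apply Hout. exists j. auto. }
    pose proof (rsum_ge_term small_subsets (fun L => gap_prod n L n x) Z
                  (fun L => gap_prod_nonneg n L n x (le_n n)) HinZ).
    unfold weight_sum in H0. simpl in *. lra.
  - set (L := firstn (S p) Z).
    assert (HLZ : forall j, In j L -> In j Z).
    { intros j Hj. rewrite <- (firstn_skipn (S p) Z). apply in_or_app; auto. }
    exists L. split; [split|split].
    + apply (NoDup_app_remove_r _ (skipn (S p) Z)). unfold L.
      rewrite firstn_skipn. apply NoDup_filter, hJ.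
    + intros j Hj. apply hJ, HZ, HLZ, Hj.
    + apply firstn_length_le. lia.
    + split; auto. intros j Hj. apply HLZ, HZ in Hj as [HjJ G].
      apply simplex_j_gap0; auto. now apply hJ.
Qed.

End PartitionOfUnity.

Theorem lemma4p4p5 (A : CStarAlgebra) (n : nat) (I : nat -> A -> Prop)
  (hI : is_sum_of_ideals A I n)
  (J : list nat) (hJ : index_set n J) (p : nat)
  (f : (nat -> R) -> A) (hf : in_B_L A I n J f)
  (hzero : forall L : list nat, index_set n L -> length L = S p ->
             forall x, simplex_L n L x -> f x = zero) :
  exists F : list (list nat * ((nat -> R) -> A)),
    (forall L g, In (L, g) F ->
        index_set n L /\ incl L J /\ (length L <= p)%nat /\ in_B_L A I n L g) /\
    (forall x, simplex n x -> f x = fam_sum A F x).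
Proof.
  assert (f_vanish : forall x, simplex n x -> weight_sum n p J x = 0 -> f x = zero).
  { intros x Sx H0.
    destruct (weight_sum_eq0 n p J hJ x Sx H0) as [[j [Hj [HJ Sj]]]|[L [HL [Hlen SL]]]].
    - exact (proj2 hf j x Hj HJ Sj).
    - exact (hzero L HL Hlen x SL). }
  exists (map (fun L => (L, fun y => scal (rC (pu_weight n p J L y)) (f y)))
              (small_subsets p J)).
  split.
  - intros L g HLg. apply in_map_iff in HLg as [L' [E HL]]. injection E as <- <-.
    destruct (in_small_subsets n p J hJ L' HL) as [HLi [Hinc Hlen]].
    split; [|split; [|split]]; auto.
    apply in_B_L_scale; [apply hI | apply hf | intro y; now apply pu_weight_bounds | |].
    + intros x Sx Hfx. apply rcont_at_pu_weight. intro H0. apply Hfx, f_vanish; auto.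
    + intros j x Hj HnL Sj. exact (pu_weight_eq0 n p J L' j x Hj HnL Sj).
  - intros x Sx. rewrite fam_sum_scale.
    destruct (Req_dec_T (weight_sum n p J x) 0) as [H0|H0].
    + now rewrite (f_vanish x Sx H0), scaler0.
    + now rewrite rsum_pu_weight, scal_one.
Qed.
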